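(* Let $H$ be a compact Lie group with a fixed maximal torus, so that every finite-dimensional complex representation of $H$ decomposes into weight spaces. For a representation $M$, write $M_{0}$ for its zero-weight subspace. Then: (i) for every finite-dimensional complex representation $N$ of $H$, with dual (conjugate) representation $\bar N$, one has $\dim\bigl((\bar N\otimes N)_{0}\bigr)\ge \dim N$; (ii) if $N$ is a quaternionic representation of $H$ (i.e. $N$ admits a nondegenerate $H$-invariant antisymmetric bilinear form), then $\dim\bigl((\Lambda^2 N)_{0}\bigr)\ge \tfrac12\dim N$; (iii) if $N$ is a real representation of $H$ (i.e. $N$ admits a nondegenerate $H$-invariant symmetric bilinear form), then $\dim\bigl((S^2 N)_{0}\bigr)\ge \tfrac12\dim N$.
   Context: Weights are taken with respect to the chosen maximal torus; the representations $N$ need not be irreducible. $\Lambda^2$ and $S^2$ denote the antisymmetric and symmetric tensor squares. *)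

From HB Require Import structures.
From mathcomp Require Import all_boot all_order all_algebra.
From mathcomp Require Import reals.
From mathcomp.real_closed Require Import complex.
Set Implicit Arguments. Unset Strict Implicit. Unset Printing Implicit Defensive.
Import Order.TTheory GRing.Theory Num.Theory.
Local Open Scope ring_scope.

Notation Cx R := (complex R).

Definition in_torus (R : realType) (r : nat) (z : 'rV[Cx R]_r) : Prop :=
  forall k : 'I_r, `|z 0 k| = 1.

Definition tmul (R : realType) (r : nat) (z w : 'rV[Cx R]_r) : 'rV[Cx R]_r :=
  \row_k (z 0 k * w 0 k).

Definition character (R : realType) (r : nat) (lam : 'rV[int]_r)
  (z : 'rV[Cx R]_r) : Cx R :=
  \prod_(k < r) (z 0 k) ^ (lam 0 k).

Definition torus_hom (R : realType) (r : nat) (H : Type) (mulH : H -> H -> H)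
  (iota : 'rV[Cx R]_r -> H) : Prop :=
  forall z w, in_torus z -> in_torus w -> iota (tmul z w) = mulH (iota z) (iota w).

Definition is_rep (R : realType) (n : nat) (H : Type) (mulH : H -> H -> H)
  (rho : H -> 'M[Cx R]_n) : Prop :=
  (forall a b, rho (mulH a b) = rho a *m rho b) /\ (forall a, rho a \in unitmx).

Definition weight_vector (R : realType) (r n : nat) (H : Type)
  (iota : 'rV[Cx R]_r -> H) (rho : H -> 'M[Cx R]_n)
  (lam : 'rV[int]_r) (v : 'cV[Cx R]_n) : Prop :=
  forall z, in_torus z -> rho (iota z) *m v = character lam z *: v.

(* Standing assumption: C^n decomposes into weight spaces, i.e. it has a
   basis (the columns of an invertible matrix P) of weight vectors. *)
Definition weight_decomposable (R : realType) (r n : nat) (H : Type)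
  (iota : 'rV[Cx R]_r -> H) (rho : H -> 'M[Cx R]_n) : Prop :=
  exists P : 'M[Cx R]_n, P \in unitmx /\
    forall j : 'I_n, exists lam : 'rV[int]_r, weight_vector iota rho lam (col j P).

(* Tensors in N (x) N, resp. Nbar (x) N, are encoded as n x n matrices M
   (M = sum M_ij e_i (x) e_j); the action of a matrix A of N is
   M |-> A M A^T on N (x) N and M |-> (A^-1)^T M A^T on N^* (x) N.
   A zero-weight vector is one fixed by the whole torus. *)
Definition zero_weight_dualtens (R : realType) (r n : nat) (H : Type)
  (iota : 'rV[Cx R]_r -> H) (rho : H -> 'M[Cx R]_n) (M : 'M[Cx R]_n) : Prop :=
  forall z, in_torus z ->
    (invmx (rho (iota z)))^T *m M *m (rho (iota z))^T = M.

Definition zero_weight_tens (R : realType) (r n : nat) (H : Type)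
  (iota : 'rV[Cx R]_r -> H) (rho : H -> 'M[Cx R]_n) (M : 'M[Cx R]_n) : Prop :=
  forall z, in_torus z -> rho (iota z) *m M *m (rho (iota z))^T = M.

(* Lambda^2 N = antisymmetric tensors, S^2 N = symmetric tensors in N (x) N. *)
Definition zero_weight_alt2 (R : realType) (r n : nat) (H : Type)
  (iota : 'rV[Cx R]_r -> H) (rho : H -> 'M[Cx R]_n) (M : 'M[Cx R]_n) : Prop :=
  M^T = - M /\ zero_weight_tens iota rho M.

Definition zero_weight_sym2 (R : realType) (r n : nat) (H : Type)
  (iota : 'rV[Cx R]_r -> H) (rho : H -> 'M[Cx R]_n) (M : 'M[Cx R]_n) : Prop :=
  M^T = M /\ zero_weight_tens iota rho M.

(* W : 'M_(n*n) represents (by its row space, under mxvec) exactly the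
   subspace {M | P M}; its dimension is then \rank W. *)
Definition represents_subspace (K : fieldType) (n m : nat)
  (P : 'M[K]_n -> Prop) (W : 'M[K]_(m, n * n)) : Prop :=
  forall M : 'M[K]_n, (mxvec M <= W)%MS <-> P M.

Definition invariant_form (R : realType) (n : nat) (H : Type)
  (rho : H -> 'M[Cx R]_n) (B : 'M[Cx R]_n) : Prop :=
  forall h, (rho h)^T *m B *m rho h = B.

Definition quaternionic (R : realType) (n : nat) (H : Type)
  (rho : H -> 'M[Cx R]_n) : Prop :=
  exists B : 'M[Cx R]_n, B \in unitmx /\ B^T = - B /\ invariant_form rho B.

Definition real_rep (R : realType) (n : nat) (H : Type)
  (rho : H -> 'M[Cx R]_n) : Prop :=
  exists B : 'M[Cx R]_n, B \in unitmx /\ B^T = B /\ invariant_form rho B.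

From HB Require Import structures.
From mathcomp Require Import all_boot all_order all_algebra.
From mathcomp Require Import reals.
From mathcomp.real_closed Require Import complex.
From mathcomp Require Import ring.
Set Implicit Arguments. Unset Strict Implicit. Unset Printing Implicit Defensive.
Import Order.TTheory GRing.Theory Num.Theory.
Local Open Scope ring_scope.

(* In a basis P of weight vectors every torus element acts by a diagonal
   matrix D, and the tensor P Z P^T of N (x) N is fixed by it iff D Z D = Z,
   while the tensor (P^-1)^T Z P^T of N^* (x) N is fixed iff Z commutes with D.
   So y |-> diag y embeds C^n into the zero-weight part of N^* (x) N.
   For an invariant form B with B^T = eps B, the Gram matrix Q = P^T B P is
   invertible, eps-symmetric and satisfies D Q D = Q, and the last two
   properties pass to every entrywise product C .* Q with C symmetric.
   Taking C_ij = y_i + y_j and C_ij = +-(y_i - y_j) gives two linear maps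
   from C^n to the zero-weight eps-symmetric tensors with no common nonzero
   kernel vector, since a nonzero entry Q_ij forces y_i + y_j = y_i - y_j = 0.
   Hence n is at most twice the dimension of that space. *)

Section RankBounds.
Variable K : fieldType.

Lemma leq_rank_linear_inj n p m (f : 'rV[K]_n -> 'rV[K]_p) (W : 'M[K]_(m, p)) :
  linear f -> (forall y, f y = 0 -> y = 0) -> (forall y, (f y <= W)%MS) ->
  (n <= \rank W)%N.
Proof.
move=> f_lin f_inj fW.
pose L := lin1_mx (HB.pack f (GRing.isLinear.Build _ _ _ _ f f_lin)
                   : {linear _ -> _}).
have mulL y : y *m L = f y by rewrite mul_rV_lin1.
have /eqP <- : row_free L.
  by apply: inj_row_free => y; rewrite mulL; apply: f_inj.
by apply/mxrankS/row_subP => i; rewrite rowE mulL.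
Qed.

Lemma leq_double_rank_linear_inj2 n p m (f g : 'rV[K]_n -> 'rV[K]_p)
    (W : 'M[K]_(m, p)) :
  linear f -> linear g -> (forall y, f y = 0 -> g y = 0 -> y = 0) ->
  (forall y, (f y <= W)%MS) -> (forall y, (g y <= W)%MS) ->
  (n <= 2 * \rank W)%N.
Proof.
move=> f_lin g_lin fg_inj fW gW.
rewrite mul2n -addnn -rank_diag_block_mx.
apply: (@leq_rank_linear_inj _ _ _ (fun y => row_mx (f y) (g y))).
- by move=> a u v; rewrite f_lin g_lin scale_row_mx add_row_mx.
- by move=> y; rewrite -row_mx0 => /eq_row_mx[]; apply: fg_inj.
- move=> y; have [[a ->] [b ->]] := (submxP (fW y), submxP (gW y)).
  apply/submxP; exists (row_mx a b).
  by rewrite mul_row_block !mulmx0 addr0 add0r.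
Qed.

End RankBounds.

Section Congruence.
Variables (K : comNzRingType) (n : nat).
Implicit Types (A B P X Y Z : 'M[K]_n) (d y : 'rV[K]_n).

Lemma eigencols_diag A P :
  (forall j, exists c, A *m col j P = c *: col j P) ->
  exists d, A *m P = P *m diag_mx d.
Proof.
move=> /fin_all_exists[c Ac]; exists (\row_j c j); apply/matrixP => i j.
have /colP/(_ i) : col j (A *m P) = c j *: col j P.
  by rewrite colE -mulmxA -colE Ac.
by rewrite mul_mx_diag !mxE mulrC => ->.
Qed.

Lemma congr_eigenbasis A P d Z : A *m P = P *m diag_mx d ->
  A *m (P *m Z *m P^T) *m A^T = P *m (diag_mx d *m Z *m diag_mx d) *m P^T.
Proof.
move=> AP; rewrite !mulmxA AP -!mulmxA -trmx_mul AP trmx_mul tr_diag_mx.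
by rewrite !mulmxA.
Qed.

Lemma form_eigenbasis A P d B : A *m P = P *m diag_mx d -> A^T *m B *m A = B ->
  diag_mx d *m (P^T *m B *m P) *m diag_mx d = P^T *m B *m P.
Proof.
move=> AP AinvB.
rewrite !mulmxA -{1}(tr_diag_mx d) -trmx_mul -AP -!mulmxA -AP trmx_mul !mulmxA.
by rewrite -(mulmxA P^T A^T) -(mulmxA P^T (A^T *m B) A) AinvB.
Qed.

Lemma trmx_congr eps P Z : Z^T = eps *: Z ->
  (P *m Z *m P^T)^T = eps *: (P *m Z *m P^T).
Proof.
by move=> ZT; rewrite !trmx_mul trmxK ZT -scalemxAl -scalemxAr mulmxA.
Qed.

Lemma linear_mxvec_congr X Y (g : 'rV[K]_n -> 'M[K]_n) :
  linear g -> linear (fun y => mxvec (X *m g y *m Y)).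
Proof.
move=> g_lin a u v.
by rewrite g_lin mulmxDr mulmxDl -scalemxAr -scalemxAl linearP.
Qed.

Lemma diag_mx_linear : linear (@diag_mx K n).
Proof. by move=> a u v; apply/matrixP => i j; rewrite !mxE mulrnDl mulrnAr. Qed.

Lemma diag_mx_inj : injective (@diag_mx K n).
Proof.
move=> u v /matrixP uv; apply/rowP => j.
by have := uv j j; rewrite !mxE eqxx !mulr1n.
Qed.

End Congruence.

Section HadamardProduct.
Variables (K : comNzRingType) (n : nat).
Implicit Types (C Q : 'M[K]_n) (d y : 'rV[K]_n).

Definition sum_coef y : 'M[K]_n := \matrix_(i, j) (y 0 i + y 0 j).

Definition gap_coef y : 'M[K]_n :=
  \matrix_(i, j) (if (i < j)%N then y 0 i - y 0 j else y 0 j - y 0 i).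

Lemma tr_sum_coef y : (sum_coef y)^T = sum_coef y.
Proof. by apply/matrixP => i j; rewrite !mxE addrC. Qed.

Lemma tr_gap_coef y : (gap_coef y)^T = gap_coef y.
Proof.
apply/matrixP => i j; rewrite !mxE.
by case: ltngtP => // /val_inj ->.
Qed.

Lemma sum_coef_linear : linear sum_coef.
Proof. by move=> a u v; apply/matrixP => i j; rewrite !mxE; ring. Qed.

Lemma gap_coef_linear : linear gap_coef.
Proof.
by move=> a u v; apply/matrixP => i j; rewrite !mxE; case: ifP => _; ring.
Qed.

Lemma map2_mul_linear Q (c : 'rV[K]_n -> 'M[K]_n) :
  linear c -> linear (fun y => map2_mx *%R (c y) Q).
Proof.
by move=> c_lin a u v; apply/matrixP => i j; rewrite c_lin !mxE; ring.
Qed.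

Lemma tr_map2_mul eps C Q : C^T = C -> Q^T = eps *: Q ->
  (map2_mx *%R C Q)^T = eps *: map2_mx *%R C Q.
Proof.
by move=> CT QT; apply/matrixP => i j; rewrite map2_trmx CT QT !mxE mulrCA.
Qed.

Lemma diag_congr_map2_mul d C Q :
  diag_mx d *m Q *m diag_mx d = Q ->
  diag_mx d *m map2_mx *%R C Q *m diag_mx d = map2_mx *%R C Q.
Proof.
move=> /matrixP dQd; apply/matrixP => i j; have := dQd i j.
by rewrite !mul_mx_diag !mul_diag_mx !mxE => {2}<-; ring.
Qed.

End HadamardProduct.

Lemma sum_gap_coef_eq0 (K : numDomainType) n (Q : 'M[K]_n) (y : 'rV[K]_n) :
  (forall i, exists j, Q i j != 0) ->
  map2_mx *%R (sum_coef y) Q = 0 -> map2_mx *%R (gap_coef y) Q = 0 -> y = 0.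
Proof.
move=> Qrow /matrixP sum0 /matrixP gap0; apply/rowP => i; rewrite mxE.
have [j Qij] := Qrow i.
have /eqP := sum0 i j; rewrite !mxE mulf_eq0 (negPf Qij) orbF => /eqP sum_ij.
have /eqP := gap0 i j; rewrite !mxE mulf_eq0 (negPf Qij) orbF => /eqP gap_ij.
have yj : y 0 j = y 0 i.
  by move: gap_ij; case: ifP => _ /eqP; rewrite subr_eq0 => /eqP.
by move: sum_ij; rewrite yj -mulr2n => /eqP; rewrite mulrn_eq0 => /eqP.
Qed.

Section UnitMatrices.
Variables (K : comUnitRingType) (n : nat).
Implicit Types (A P U V X : 'M[K]_n) (d y : 'rV[K]_n).

Lemma unitmx_row_neq0 U i : U \in unitmx -> exists j, U i j != 0.
Proof.
move=> Uu; apply/existsP; apply: contraTT (oner_neq0 K) => /existsPn Ui0.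
have <- : (U *m invmx U) i i = 1 by rewrite mulmxV // mxE eqxx.
by rewrite mxE big1 ?eqxx // => j _; rewrite (eqP (negPn (Ui0 j))) mul0r.
Qed.

Lemma unitmx_congr_eq0 U V X : U \in unitmx -> V \in unitmx ->
  U *m X *m V = 0 -> X = 0.
Proof.
move=> Uu Vu UXV0.
by rewrite -(mulKmx Uu X) -(mulmxK Vu (U *m X)) UXV0 mul0mx mulmx0.
Qed.

Lemma dual_congr_eigenbasis_diag A P d y :
  A \in unitmx -> P \in unitmx -> A *m P = P *m diag_mx d ->
  (invmx A)^T *m ((invmx P)^T *m diag_mx y *m P^T) *m A^T
    = (invmx P)^T *m diag_mx y *m P^T.
Proof.
move=> Au Pu AP.
have AT : A^T = (invmx P)^T *m diag_mx d *m P^T.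
  by rewrite -[A](mulmxK Pu) AP !trmx_mul tr_diag_mx mulmxA.
have PTK : P^T *m (invmx P)^T = 1%:M by rewrite -trmx_mul mulVmx // trmx1.
suff comm : (invmx P)^T *m diag_mx y *m P^T *m A^T
          = A^T *m ((invmx P)^T *m diag_mx y *m P^T).
  by rewrite -mulmxA comm mulmxA -trmx_mul mulmxV // trmx1 mul1mx.
rewrite AT !mulmxA -!(mulmxA _ P^T) PTK !mulmx1 -!(mulmxA (invmx P)^T).
by rewrite (diag_mx_comm y d).
Qed.

End UnitMatrices.


Section ZeroWeightTensors.
Variables (R : realType) (H : Type) (r n : nat).
Variables (iota : 'rV[Cx R]_r -> H) (rho : H -> 'M[Cx R]_n).
Implicit Types (P : 'M[Cx R]_n) (z : 'rV[Cx R]_r) (W : 'M[Cx R]_(n * n)).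

Lemma torus_diag_in_weight_basis P z :
  (forall j, exists lam, weight_vector iota rho lam (col j P)) -> in_torus z ->
  exists d, rho (iota z) *m P = P *m diag_mx d.
Proof.
move=> Pw z_T; apply: eigencols_diag => j.
by have [lam /(_ z z_T)] := Pw j; exists (character lam z).
Qed.

Lemma leq_rank_zero_weight_dualtens W :
  (forall h, rho h \in unitmx) -> weight_decomposable iota rho ->
  represents_subspace (zero_weight_dualtens iota rho) W -> (n <= \rank W)%N.
Proof.
move=> rho_u [P [Pu Pw]] Wrep.
apply: (@leq_rank_linear_inj _ _ _ _
  (fun y => mxvec ((invmx P)^T *m diag_mx y *m P^T))).
- exact/linear_mxvec_congr/diag_mx_linear.
- move=> y /eqP; rewrite mxvec_eq0 => /eqP /unitmx_congr_eq0.
  rewrite unitmx_tr unitmx_inv unitmx_tr Pu => /(_ isT isT).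
  by rewrite -(raddf0 (@diag_mx _ n)) => /diag_mx_inj.
- move=> y; apply/Wrep => z z_T.
  have [d AP] := torus_diag_in_weight_basis Pw z_T.
  exact: dual_congr_eigenbasis_diag (rho_u _) Pu AP.
Qed.

Lemma leq_double_rank_zero_weight_form eps W :
  weight_decomposable iota rho ->
  (exists B, B \in unitmx /\ B^T = eps *: B /\ invariant_form rho B) ->
  (forall M, M^T = eps *: M -> zero_weight_tens iota rho M ->
     (mxvec M <= W)%MS) ->
  (n <= 2 * \rank W)%N.
Proof.
move=> [P [Pu Pw]] [B [Bu [BT Binv]]] Wsub.
pose Q := P^T *m B *m P.
have QT : Q^T = eps *: Q.
  by rewrite !trmx_mul trmxK BT -scalemxAl -scalemxAr mulmxA.
have Qu : Q \in unitmx by rewrite !unitmx_mul unitmx_tr Pu Bu.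
pose tens (c : 'rV[Cx R]_n -> 'M_n) (y : 'rV[Cx R]_n) :=
  mxvec (P *m map2_mx *%R (c y) Q *m P^T).
have tens_lin c : linear c -> linear (tens c).
  by move=> c_lin; apply/linear_mxvec_congr/map2_mul_linear.
have tens_in c : (forall y, (c y)^T = c y) -> forall y, (tens c y <= W)%MS.
  move=> c_sym y; apply: Wsub; first exact/trmx_congr/tr_map2_mul.
  move=> z z_T; have [d AP] := torus_diag_in_weight_basis Pw z_T.
  rewrite (congr_eigenbasis _ AP) diag_congr_map2_mul //.
  exact: form_eigenbasis AP (Binv _).
have tens_eq0 c y : tens c y = 0 -> map2_mx *%R (c y) Q = 0.
  move/eqP; rewrite mxvec_eq0 => /eqP /unitmx_congr_eq0.
  by apply; rewrite ?unitmx_tr.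
apply: (leq_double_rank_linear_inj2
  (f := tens (@sum_coef _ n)) (g := tens (@gap_coef _ n))).
- exact/tens_lin/sum_coef_linear.
- exact/tens_lin/gap_coef_linear.
- move=> y /tens_eq0 sum0 /tens_eq0 gap0.
  by apply: sum_gap_coef_eq0 sum0 gap0 => i; apply: unitmx_row_neq0.
- exact/tens_in/tr_sum_coef.
- exact/tens_in/tr_gap_coef.
Qed.

End ZeroWeightTensors.

Theorem mainTheorem1 (R : realType) (H : Type) (mulH : H -> H -> H) (r : nat)
  (iota : 'rV[Cx R]_r -> H) (hiota : torus_hom mulH iota) :
  (forall (n : nat) (rho : H -> 'M[Cx R]_n), is_rep mulH rho ->
     weight_decomposable iota rho ->
     forall W : 'M[Cx R]_(n * n),
       represents_subspace (zero_weight_dualtens iota rho) W ->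
       (n <= \rank W)%N)
  /\
  (forall (n : nat) (rho : H -> 'M[Cx R]_n), is_rep mulH rho ->
     weight_decomposable iota rho -> quaternionic rho ->
     forall W : 'M[Cx R]_(n * n),
       represents_subspace (zero_weight_alt2 iota rho) W ->
       (n <= 2 * \rank W)%N)
  /\
  (forall (n : nat) (rho : H -> 'M[Cx R]_n), is_rep mulH rho ->
     weight_decomposable iota rho -> real_rep rho ->
     forall W : 'M[Cx R]_(n * n),
       represents_subspace (zero_weight_sym2 iota rho) W ->
       (n <= 2 * \rank W)%N).
Proof.
split; [|split].
- move=> n rho [_ rho_u] wd W Wrep.
  exact: leq_rank_zero_weight_dualtens rho_u wd Wrep.
- move=> n rho _ wd [B [Bu [BT Binv]]] W Wrep.
  apply: (@leq_double_rank_zero_weight_form _ _ _ _ iota rho (-1)) => //.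
    by exists B; rewrite scaleN1r.
  by move=> M MT M0; apply/Wrep; split => //; rewrite MT scaleN1r.
- move=> n rho _ wd [B [Bu [BT Binv]]] W Wrep.
  apply: (@leq_double_rank_zero_weight_form _ _ _ _ iota rho 1) => //.
    by exists B; rewrite scale1r.
  by move=> M MT M0; apply/Wrep; split => //; rewrite MT scale1r.
Qed.
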